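(* Let $d\ge2$, $N\ge1$, $\boldsymbol{\alpha}=(\alpha_1,\dots,\alpha_d)$ with all $\alpha_i>0$, and $s$ an integer with $0\le s\le N$. Each of the Pólya level model, the Pólya down-up model and the Pólya up-down model with these parameters is a Markov chain on $\mathcal{X}_N^d$ that is reversible with respect to the Dirichlet-multinomial distribution $\mathcal{DM}(\cdot\mid N,\boldsymbol{\alpha})$.
   Context: $\mathcal{X}_N^d=\{\mathbf{x}\in\mathbb{N}_0^d:|\mathbf{x}|=N\}$, where $|\mathbf{x}|=\sum_i x_i$. Rising factorial: $a_{(k)}=a(a+1)\cdots(a+k-1)$, $a_{(0)}=1$. The Dirichlet-multinomial distribution is $\mathcal{DM}(\mathbf{x}\mid N,\boldsymbol{\alpha})=\frac{N!}{x_1!\cdots x_d!}\frac{\prod_{i=1}^d(\alpha_i)_{(x_i)}}{|\boldsymbol{\alpha}|_{(N)}}$ for $\mathbf{x}\in\mathcal{X}_N^d$, where $|\boldsymbol{\alpha}|=\sum_i\alpha_i$. Pólya urn models: an urn contains $d$ special balls, the $i$-th of color $i$ and weight $\alpha_i$, together with $N$ ordinary balls, each of unit weight and of one of the colors $1,\dots,d$. A Pólya draw consists of choosing a ball from the urn (special or ordinary) with probability proportional to its weight, and returning it together with one new ordinary ball (unit weight) of the same color. One step of the Pólya level model: mark $s$ of the $N$ ordinary balls uniformly at random (without replacement); perform $s$ successive Pólya draws (the marked balls stay in the urn during the draws); then remove the $s$ marked balls. One step of the Pólya down-up model: remove $s$ ordinary balls chosen uniformly at random among the $N$ ordinary balls,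 then perform $s$ successive Pólya draws. One step of the Pólya up-down model: perform $s$ successive Pólya draws, then remove $s$ ordinary balls chosen uniformly at random among the $N+s$ ordinary balls. In all three models the state $\mathbf{X}_t\in\mathcal{X}_N^d$ is the vector of color counts of the $N$ ordinary balls after $t$ steps. *)

From HB Require Import structures.
From mathcomp Require Import all_boot all_order all_algebra.
Set Implicit Arguments. Unset Strict Implicit. Unset Printing Implicit Defensive.
Import Order.TTheory GRing.Theory Num.Theory.
Local Open Scope ring_scope.

(* Colour-count vectors of ordinary balls: x : 'I_d -> nat. *)
Definition cnt (d : nat) := {ffun 'I_d -> nat}.

Definition csize (d : nat) (c : cnt d) : nat := (\sum_(i < d) c i)%N.

Definition incr (d : nat) (c : cnt d) (i : 'I_d) : cnt d :=
  [ffun j => (c j + (j == i))%N].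

Definition cadd (d : nat) (c r : cnt d) : cnt d := [ffun i => (c i + r i)%N].
Definition csub (d : nat) (c r : cnt d) : cnt d := [ffun i => (c i - r i)%N].

Section Defs.
Variables (R : realFieldType) (d : nat) (alpha : 'I_d -> R).

Definition asum : R := \sum_(i < d) alpha i.

Definition rising (a : R) (k : nat) : R := \prod_(j < k) (a + j%:R).

Definition DM (N : nat) (x : cnt d) : R :=
  (N`!)%:R / (\prod_(i < d) (x i)`!)%:R
  * (\prod_(i < d) rising (alpha i) (x i)) / rising asum N.

(* Probability that a single Polya draw from an urn whose ordinary balls
   have colour counts c yields colour i (special ball of colour i has
   weight alpha i, each ordinary ball weight 1). *)
Definition draw_prob (c : cnt d) (i : 'I_d) : R :=
  (alpha i + (c i)%:R) / (asum + (csize c)%:R).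

(* polya k c z = probability that after k successive Polya draws starting
   from ordinary counts c, the ordinary counts are z. *)
Fixpoint polya (k : nat) (c : cnt d) (z : cnt d) : R :=
  match k with
  | 0 => (z == c)%:R
  | k'.+1 => \sum_(i < d) draw_prob c i * polya k' (incr c i) z
  end.

(* Probability that a uniformly random subset of |r| ordinary balls, among
   the balls with colour counts c, has colour composition r. *)
Definition hyp (c r : cnt d) : R :=
  (\prod_(i < d) 'C(c i, r i))%:R / ('C(csize c, csize r))%:R.

Definition tocnt (M : nat) (y : {ffun 'I_d -> 'I_M}) : cnt d :=
  [ffun i => nat_of_ord (y i)].

(* Transition kernels; the sum runs over the composition r of the s
   marked / removed balls. *)
Definition level_kernel (s : nat) (x y : cnt d) : R :=
  \sum_(r : {ffun 'I_d -> 'I_s.+1} | (\sum_(i < d) nat_of_ord (r i) == s)%N)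
    hyp x (tocnt r) * polya s x (cadd y (tocnt r)).

Definition downup_kernel (s : nat) (x y : cnt d) : R :=
  \sum_(r : {ffun 'I_d -> 'I_s.+1} | (\sum_(i < d) nat_of_ord (r i) == s)%N)
    hyp x (tocnt r) * polya s (csub x (tocnt r)) y.

Definition updown_kernel (s : nat) (x y : cnt d) : R :=
  \sum_(r : {ffun 'I_d -> 'I_s.+1} | (\sum_(i < d) nat_of_ord (r i) == s)%N)
    polya s x (cadd y (tocnt r)) * hyp (cadd y (tocnt r)) (tocnt r).

Definition inX (N : nat) (x : cnt d) : bool := csize x == N.

Definition reversible_chain (N : nat) (K : cnt d -> cnt d -> R) : Prop :=
  [/\ (forall x y, inX N x -> 0 <= K x y),
      (forall x y, inX N x -> ~~ inX N y -> K x y = 0),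
      (forall x, inX N x ->
         \sum_(y : {ffun 'I_d -> 'I_N.+1} | inX N (tocnt y)) K x (tocnt y) = 1)
    & (forall x y, inX N x -> inX N y -> DM N x * K x y = DM N y * K y x)].

End Defs.

From HB Require Import structures.
From mathcomp Require Import all_boot all_order all_algebra.
From mathcomp Require Import zify ring.
Import Order.TTheory GRing.Theory Num.Theory.
Local Open Scope ring_scope.
Set Implicit Arguments. Unset Strict Implicit. Unset Printing Implicit Defensive.

(* Each kernel is a sum over the colour composition r of the s marked (or
   removed) balls.  For fixed r, DM(x) times the r-term is a constant depending
   only on N and s times a product over the colours i of a weight
   phi(x_i, y_i, r_i) built from rising factorials of alpha_i, and each phi is
   invariant under (x, y, r) |-> (y, x, y + r - x).  Since r |-> y + r - x
   exchanges the compositions contributing to K(x, y) and to K(y, x), detailed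
   balance holds term by term.  The rows of K sum to one because Pólya draws and
   hypergeometric sampling are probability distributions; for the latter this is
   Vandermonde's identity, read off the coefficients of prod_i (X + 1)^(x_i). *)

Lemma sum_support_bij (V : nmodType) (I J : finType) (F : I -> V) (G : J -> V)
    (f : I -> J) (g : J -> I) :
  (forall i, F i != 0 -> g (f i) = i /\ G (f i) = F i) ->
  (forall j, G j != 0 -> f (g j) = j /\ F (g j) = G j) ->
  \sum_i F i = \sum_j G j.
Proof.
move=> fK gK.
rewrite (bigID (fun i => F i != 0)) [RHS](bigID (fun j => G j != 0)) /=.
rewrite [X in _ + X]big1 => [|i /negPn/eqP //].
rewrite [X in _ = _ + X]big1 => [|j /negPn/eqP //]; rewrite !addr0.
rewrite (reindex_onto g f) => [|i /fK[]//]; apply: eq_big => j.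
  apply/andP/idP => [[Fg /eqP fg]|Gj]; last by have [-> ->] := gK _ Gj; rewrite Gj.
  by have [_ E] := fK _ Fg; rewrite -fg E.
by case/andP=> Fg /eqP fg; have [_ E] := fK _ Fg; rewrite -[in RHS]fg E.
Qed.

Section Rising.
Variable R : realFieldType.
Implicit Type a : R.

Lemma rising0 a : rising a 0 = 1.
Proof. by rewrite /rising big_ord0. Qed.

Lemma risingS a n : rising a n.+1 = a * rising (a + 1) n.
Proof.
rewrite /rising big_ord_recl addr0; congr (_ * _); apply: eq_bigr => i _.
rewrite /bump /= -addrA; congr (_ + _).
by rewrite -natr1 addrC.
Qed.

Lemma risingD a m n : rising a (m + n) = rising a m * rising (a + m%:R) n.
Proof.
rewrite /rising big_split_ord; congr (_ * _); apply: eq_bigr => i _.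
by rewrite natrD addrA.
Qed.

Lemma rising_gt0 a n : 0 < a -> 0 < rising a n.
Proof.
move=> a_gt0; apply: prodr_gt0 => i _.
by rewrite (lt_le_trans a_gt0) // lerDl ler0n.
Qed.

Lemma rising_neq0 a n : 0 < a -> rising a n != 0.
Proof. by move=> a_gt0; rewrite gt_eqF ?rising_gt0. Qed.

Lemma natr_fact_neq0 n : n`!%:R != 0 :> R.
Proof. by rewrite pnatr_eq0 -lt0n fact_gt0. Qed.

Lemma natr_bin_fact n m : (m <= n)%N ->
  'C(n, m)%:R = n`!%:R / (m`!%:R * (n - m)`!%:R) :> R.
Proof.
by move=> le_mn; rewrite -(bin_fact le_mn) !natrM mulfK ?mulf_neq0 ?natr_fact_neq0.
Qed.

Lemma natr_bin_neq0 n m : (m <= n)%N -> 'C(n, m)%:R != 0 :> R.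
Proof. by move=> le_mn; rewrite pnatr_eq0 -lt0n bin_gt0. Qed.

Lemma prod_natr_fact_neq0 (I : finType) (f : I -> nat) : \prod_i (f i)`!%:R != 0 :> R.
Proof. by apply/prodf_neq0 => i _; apply: natr_fact_neq0. Qed.

End Rising.

Section CountVectors.
Variable d : nat.
Implicit Types c z r : cnt d.

Definition cnt_le c z := [forall i, c i <= z i]%N.

Lemma cnt_leP c z : reflect (forall i, c i <= z i)%N (cnt_le c z).
Proof. exact: forallP. Qed.

Lemma leq_csize c i : (c i <= csize c)%N.
Proof. by rewrite /csize (bigD1 i) //= leq_addr. Qed.

Lemma cnt_le_trans c1 c2 c3 : cnt_le c1 c2 -> cnt_le c2 c3 -> cnt_le c1 c3.
Proof.
by move=> /cnt_leP le12 /cnt_leP le23; apply/cnt_leP=> i; apply: leq_trans (le12 i) (le23 i).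
Qed.

Lemma csize_incr c i : csize (incr c i) = (csize c).+1.
Proof.
rewrite /csize (bigD1 i) // [in RHS](bigD1 i) //= ffunE eqxx addn1 addSn.
by congr (_ + _).+1; apply: eq_bigr => j /negbTE ji; rewrite ffunE ji addn0.
Qed.

Lemma csize_cadd c r : csize (cadd c r) = (csize c + csize r)%N.
Proof. by rewrite /csize -big_split; apply: eq_bigr => i _; rewrite ffunE. Qed.

Lemma cadd_csubK c z : cnt_le c z -> cadd c (csub z c) = z.
Proof. by move/cnt_leP=> le_cz; apply/ffunP=> i; rewrite !ffunE subnKC. Qed.

Lemma csize_csub c r : cnt_le r c -> csize (csub c r) = (csize c - csize r)%N.
Proof. by move/cadd_csubK=> {2}<-; rewrite csize_cadd addKn. Qed.

Lemma cnt_le_csize_eq c z : cnt_le c z -> csize z = csize c -> z = c.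
Proof.
move=> le_cz eq_zc; apply/ffunP=> i.
have csize0 : csize (csub z c) = 0%N by rewrite csize_csub // eq_zc subnn.
have := leq_csize (csub z c) i; rewrite csize0 leqn0 ffunE subn_eq0 => le_zc.
by apply/eqP; rewrite eqn_leq le_zc (cnt_leP _ _ le_cz).
Qed.

Lemma csize_tocnt M (y : {ffun 'I_d -> 'I_M}) : csize (tocnt y) = (\sum_i y i)%N.
Proof. by apply: eq_bigr => i _; rewrite ffunE. Qed.

End CountVectors.

Section BoxSums.
Variables (R : realFieldType) (d : nat).
Implicit Types c r : cnt d.

Definition box_sum M (F : cnt d -> R) := \sum_(y : {ffun 'I_d -> 'I_M.+1}) F (tocnt y).

Definition ofcnt M c : {ffun 'I_d -> 'I_M.+1} := [ffun i => inord (c i)].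

Lemma ofcntK M c : (forall i, c i <= M)%N -> tocnt (ofcnt M c) = c.
Proof. by move=> le_cM; apply/ffunP=> i; rewrite !ffunE inordK // ltnS. Qed.

Lemma tocntK M : cancel (@tocnt d M.+1) (ofcnt M).
Proof. by move=> y; apply/ffunP=> i; rewrite !ffunE; apply: val_inj; rewrite /= inordK. Qed.

Lemma box_sum_shift M M' F r :
    (forall c, F c != 0 -> cnt_le r c /\ forall i, (c i - r i <= M)%N /\ (c i <= M')%N) ->
  box_sum M (fun y => F (cadd y r)) = box_sum M' F.
Proof.
move=> F_supp; apply: (sum_support_bij (f := fun y => ofcnt M' (cadd (tocnt y) r))
  (g := fun y => ofcnt M (csub (tocnt y) r))) => y /F_supp[le_r bound].
  rewrite ofcntK => [|i]; last by case: (bound i).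
  suff -> : csub (cadd (tocnt y) r) r = tocnt y by rewrite tocntK.
  by apply/ffunP=> i; rewrite !ffunE addnK.
rewrite ofcntK => [|i]; last by rewrite ffunE; case: (bound i).
suff -> : cadd (csub (tocnt y) r) r = tocnt y by rewrite tocntK.
by apply/ffunP=> i; rewrite !ffunE subnK //; have := cnt_leP _ _ le_r i; rewrite ffunE.
Qed.

Lemma box_sum_shift_csize M F r :
    (forall c, F c != 0 -> cnt_le r c /\ csize c = (M + csize r)%N) ->
  box_sum M (fun y => F (cadd y r)) = box_sum (M + csize r) F.
Proof.
move=> F_supp; apply: box_sum_shift => c /F_supp[le_rc csize_c]; split=> // i.
split; last by rewrite -csize_c leq_csize.
by have := leq_csize (csub c r) i; rewrite csize_csub // csize_c addnK ffunE.
Qed.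

Lemma box_sum_widen M M' F :
  (forall c, F c != 0 -> forall i, (c i <= minn M M')%N) -> box_sum M F = box_sum M' F.
Proof.
move=> F_supp; apply: (sum_support_bij (f := fun y => ofcnt M' (tocnt y))
  (g := fun y => ofcnt M (tocnt y))) => y /F_supp bound;
by rewrite ofcntK ?tocntK // => i; have := bound i; rewrite leq_min => /andP[].
Qed.

End BoxSums.

Section PolyaDraws.
Variables (R : realFieldType) (d : nat) (alpha : 'I_d -> R).
Hypotheses (alpha_gt0 : forall i, 0 < alpha i) (d_gt0 : (0 < d)%N).
Implicit Types c z : cnt d.

Lemma asum_gt0 : 0 < asum alpha.
Proof.
rewrite /asum (bigD1 (Ordinal d_gt0)) //= ltr_wpDr ?alpha_gt0 //.
by apply: sumr_ge0 => i _; apply: ltW.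
Qed.

Lemma asumD_gt0 n : 0 < asum alpha + n%:R.
Proof. by rewrite ltr_wpDr ?ler0n ?asum_gt0. Qed.

Lemma rising_asum_neq0 k : rising (asum alpha) k != 0.
Proof. exact/rising_neq0/asum_gt0. Qed.

Lemma rising_asumD_neq0 n k : rising (asum alpha + n%:R) k != 0.
Proof. exact/rising_neq0/asumD_gt0. Qed.

Lemma draw_prob_ge0 c i : 0 <= draw_prob alpha c i.
Proof.
apply: divr_ge0; last exact: ltW (asumD_gt0 _).
by rewrite addr_ge0 ?ler0n // ltW.
Qed.

Lemma sum_draw_prob c : \sum_i draw_prob alpha c i = 1.
Proof.
rewrite /draw_prob -mulr_suml big_split /= -natr_sum.
by rewrite divff // gt_eqF ?asumD_gt0.
Qed.

Lemma polya_ge0 k c z : 0 <= polya alpha k c z.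
Proof.
elim: k c => [|k IHk] c /=; first by rewrite ler0n.
by apply: sumr_ge0 => i _; rewrite mulr_ge0 ?draw_prob_ge0.
Qed.

Lemma polya_supp k c z :
  polya alpha k c z != 0 -> cnt_le c z && (csize z == csize c + k)%N.
Proof.
elim: k c => [|k IHk] c /=.
  by rewrite pnatr_eq0 eqb0 negbK => /eqP->; rewrite addn0 eqxx andbT; apply/cnt_leP.
have term_ge0 i : true -> 0 <= draw_prob alpha c i * polya alpha k (incr c i) z.
  by rewrite mulr_ge0 ?draw_prob_ge0 ?polya_ge0.
move=> /eqP/(psumr_neq0P term_ge0)[i /andP[_ /lt0r_neq0]].
rewrite mulf_eq0 negb_or => /andP[_ /IHk/andP[/cnt_leP le_cz /eqP->]].
rewrite csize_incr addSnnS eqxx andbT; apply/cnt_leP=> j.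
by apply: leq_trans (le_cz j); rewrite ffunE leq_addr.
Qed.

(* [polya_pmf k c z] is DM(z - c | k, alpha + c). *)
Definition polya_pmf k c z : R := k`!%:R *
  (\prod_i (rising (alpha i + (c i)%:R) (z i - c i) / (z i - c i)`!%:R))
  / rising (asum alpha + (csize c)%:R) k.

Lemma draw_prob_polya_pmf k c z i : cnt_le c z -> (c i < z i)%N ->
  draw_prob alpha c i * polya_pmf k (incr c i) z
  = (z i - c i)%:R * polya_pmf k.+1 c z / k.+1%:R.
Proof.
move=> le_cz lt_ciz.
rewrite /polya_pmf /draw_prob csize_incr.
rewrite (bigD1 i) //= [X in _ = _ * (_ * X / _) / _](bigD1 i) //= ffunE eqxx.
under eq_bigr => j /negbTE ji do rewrite ffunE ji addn0.
have -> : (z i - c i = (z i - (c i + 1)).+1)%N by lia.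
set m := (z i - (c i + 1))%N; set P := \prod_(j | j != i) _.
rewrite risingS [rising (asum _ + _) k.+1]risingS !factS !natrM -!natr1 natrD !addrA.
have asum_neq0 := lt0r_neq0 (asumD_gt0 (csize c)).
have rising_neq0 : rising (asum alpha + (csize c)%:R + 1) k != 0.
  by rewrite rising_neq0 // ltr_wpDr ?ler01 ?asumD_gt0.
have n1_neq0 n : n%:R + 1 != 0 :> R by rewrite natr1 pnatr_eq0.
by field; rewrite ?natr_fact_neq0 ?n1_neq0 ?rising_neq0 ?asum_neq0.
Qed.

Lemma polyaE k c z : cnt_le c z -> csize z = (csize c + k)%N ->
  polya alpha k c z = polya_pmf k c z.
Proof.
elim: k c => [|k IHk] c le_cz.
  rewrite addn0 => /(cnt_le_csize_eq le_cz) ->.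
  rewrite /= eqxx /polya_pmf rising0 divr1 mul1r big1 // => i _.
  by rewrite subnn rising0 divr1.
move=> csize_z /=.
have termE i : draw_prob alpha c i * polya alpha k (incr c i) z =
    (z i - c i)%:R * (polya_pmf k.+1 c z / k.+1%:R).
  have [lt_ciz|le_zci] := ltnP (c i) (z i).
    rewrite IHk; first by rewrite mulrA draw_prob_polya_pmf.
      apply/cnt_leP=> j; rewrite ffunE; case: eqVneq => [->|_] /=.
        by rewrite addn1.
      by rewrite addn0 (cnt_leP _ _ le_cz).
    by rewrite csize_incr csize_z addSnnS.
  have -> : (z i - c i = 0)%N by apply/eqP; rewrite subn_eq0.
  suff -> : polya alpha k (incr c i) z = 0 by rewrite mulr0 mul0r.
  apply/eqP; apply: contraTT le_zci => /polya_supp/andP[/cnt_leP/(_ i) + _].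
  by rewrite ffunE eqxx addn1 -ltnNge.
rewrite (eq_bigr _ (fun i _ => termE i)) -mulr_suml -natr_sum.
have -> : (\sum_i (z i - c i))%N = k.+1.
  have := csize_csub le_cz; rewrite csize_z addKn => <-.
  by apply: eq_bigr => i _; rewrite ffunE.
by rewrite mulrC -mulrA mulVf ?mulr1 // pnatr_eq0.
Qed.

Lemma polya_mass k c M : (csize c + k <= M)%N -> box_sum M (polya alpha k c) = 1.
Proof.
elim: k c => [|k IHk] c.
  rewrite addn0 => le_cM; rewrite /box_sum (bigD1 (ofcnt M c)) //= ofcntK; last first.
    by move=> i; apply: leq_trans le_cM; apply: leq_csize.
  rewrite eqxx big1 ?addr0 // => y y_neq; apply/eqP; rewrite pnatr_eq0 eqb0.
  by apply: contra y_neq => /eqP <-; rewrite tocntK.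
move=> le_cM; rewrite /box_sum /= exchange_big -(sum_draw_prob c) /=.
apply: eq_bigr => i _; rewrite -mulr_sumr.
by rewrite [X in _ * X]IHk ?mulr1 // csize_incr addSnnS.
Qed.

End PolyaDraws.

Section Hypergeometric.
Variables (R : realFieldType) (d : nat).
Implicit Types x c r : cnt d.

Definition comp_sum s (F : cnt d -> R) :=
  \sum_(r : {ffun 'I_d -> 'I_s.+1} | (\sum_(i < d) nat_of_ord (r i) == s)%N) F (tocnt r).

Lemma comp_sumE s F :
  comp_sum s F = box_sum s (fun c => if csize c == s then F c else 0).
Proof. by rewrite /comp_sum big_mkcond; apply: eq_bigr => r _; rewrite csize_tocnt. Qed.

Lemma exprD1n_widen n M : (n <= M)%N ->
  ('X + 1) ^+ n = \sum_(k < M.+1) 'X^k *+ 'C(n, k) :> {poly R}.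
Proof.
move=> le_nM; rewrite exprD1n (@big_ord_widen _ _ _ n.+1 M.+1 (fun k => 'X^k *+ 'C(n, k))) //.
rewrite big_mkcond; apply: eq_bigr => k _; case: ltnP => // lt_nk.
by rewrite bin_small ?mulr0n.
Qed.

Lemma coef_exprD1n n s : (('X + 1) ^+ n : {poly R})`_s = 'C(n, s)%:R.
Proof.
rewrite (exprD1n_widen (leq_maxl n s)) coef_sum (bigD1 (inord s)) //=.
rewrite coefMn coefXn inordK ?ltnS ?leq_maxr // eqxx big1 ?addr0 // => k.
rewrite -val_eqE /= inordK ?ltnS ?leq_maxr // => /negbTE ks.
by rewrite coefMn coefXn eq_sym ks mul0rn.
Qed.

Lemma sum_prod_binomial x s : (s <= csize x)%N ->
  comp_sum s (fun r => (\prod_i 'C(x i, r i))%:R) = 'C(csize x, s)%:R.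
Proof.
move=> le_sx; rewrite -coef_exprD1n {1}/csize -prodrXr.
under eq_bigr do rewrite (exprD1n_widen (leq_csize x _)).
rewrite bigA_distr_bigA coef_sum comp_sumE -(@box_sum_widen _ _ (csize x)) => [|c].
  apply: eq_bigr => f _; rewrite prodrMn prodrXr coefMn coefXn csize_tocnt eq_sym.
  case: eqP => _; last by rewrite mul0rn.
  by rewrite /= mulr1n; under eq_bigr do rewrite ffunE.
case: (csize c =P s) => [csize_c _ i|]; rewrite ?eqxx //.
by rewrite leq_min -csize_c leq_csize (leq_trans (leq_csize c i)) ?csize_c.
Qed.

Lemma hyp_ge0 x r : 0 <= hyp R x r.
Proof. by rewrite divr_ge0 ?ler0n. Qed.

Lemma hyp_supp x r : hyp R x r != 0 -> cnt_le r x.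
Proof.
apply: contraNT => /forallPn[i]; rewrite -ltnNge => lt_xr.
by rewrite /hyp (bigD1 i) //= bin_small ?mul0n ?mul0r.
Qed.

Lemma sum_hyp x s : (s <= csize x)%N -> comp_sum s (hyp R x) = 1.
Proof.
move=> le_sx.
transitivity (comp_sum s (fun r => (\prod_i 'C(x i, r i))%:R) / 'C(csize x, s)%:R).
  by rewrite /comp_sum mulr_suml; apply: eq_bigr => r /eqP rs; rewrite /hyp csize_tocnt rs.
by rewrite sum_prod_binomial // divff // pnatr_eq0 -lt0n bin_gt0.
Qed.

End Hypergeometric.

Section ColourWeights.
Variables (R : realFieldType) (a : R).
Implicit Types x y r : nat.

Local Notation fact_neq0 := (natr_fact_neq0 R).

(* Colour-[i] factors of DM(x) * K(x, y) for the term of composition r, with a = alpha_i. *)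
Definition level_weight x y r : R := rising a x / x`!%:R * 'C(x, r)%:R *
  (rising (a + x%:R) (y + r - x) / (y + r - x)`!%:R).

Definition downup_weight x y r : R := rising a x / x`!%:R * 'C(x, r)%:R *
  (rising (a + (x - r)%:R) (y - (x - r)) / (y - (x - r))`!%:R).

Definition updown_weight x y r : R := rising a x / x`!%:R *
  (rising (a + x%:R) (y + r - x) / (y + r - x)`!%:R) * 'C(y + r, r)%:R.

Lemma level_weightE x y r : (r <= x)%N -> (x <= y + r)%N ->
  level_weight x y r = rising a (y + r) / (r`!%:R * (x - r)`!%:R * (y + r - x)`!%:R).
Proof.
move=> le_rx le_xyr; rewrite /level_weight natr_bin_fact //.
rewrite -[in rising a (y + r)](subnKC le_xyr) risingD.
by field; rewrite !fact_neq0.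
Qed.

Lemma level_weight_sym x y r : (r <= x)%N -> (x <= y + r)%N ->
  level_weight x y r = level_weight y x (y + r - x).
Proof.
move=> le_rx le_xyr; rewrite level_weightE // level_weightE; [|lia|lia].
have -> : (x + (y + r - x) = y + r)%N by lia.
have -> : (y - (y + r - x) = x - r)%N by lia.
have -> : (y + r - y = r)%N by lia.
by field; rewrite !fact_neq0.
Qed.

Lemma downup_weightE x y r : (r <= x)%N -> (x - r <= y)%N ->
  downup_weight x y r = rising a (x - r) * rising (a + (x - r)%:R) r *
    rising (a + (x - r)%:R) (y - (x - r)) /
    (r`!%:R * (x - r)`!%:R * (y - (x - r))`!%:R).
Proof.
move=> le_rx le_xry; rewrite /downup_weight natr_bin_fact //.
rewrite -[in rising a x](subnK le_rx) risingD.
by field; rewrite !fact_neq0.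
Qed.

Lemma downup_weight_sym x y r : (r <= x)%N -> (x <= y + r)%N ->
  downup_weight x y r = downup_weight y x (y + r - x).
Proof.
move=> le_rx le_xyr; rewrite downup_weightE; [|lia|lia]; rewrite downup_weightE; [|lia|lia].
have -> : (y - (y + r - x) = x - r)%N by lia.
have -> : (x - (x - r) = r)%N by lia.
have -> : (y + r - x = y - (x - r))%N by lia.
by field; rewrite !fact_neq0.
Qed.

Lemma updown_weightE x y r : (x <= y + r)%N ->
  updown_weight x y r = rising a (y + r) * (y + r)`!%:R /
    (x`!%:R * (y + r - x)`!%:R * r`!%:R * y`!%:R).
Proof.
move=> le_xyr; rewrite /updown_weight natr_bin_fact ?leq_addl // addnK.
rewrite -[in rising a (y + r)](subnKC le_xyr) risingD.
by field; rewrite !fact_neq0.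
Qed.

Lemma updown_weight_sym x y r : (x <= y + r)%N ->
  updown_weight x y r = updown_weight y x (y + r - x).
Proof.
move=> le_xyr; rewrite updown_weightE // updown_weightE; last lia.
have -> : (x + (y + r - x) = y + r)%N by lia.
have -> : (y + r - y = r)%N by lia.
by field; rewrite !fact_neq0.
Qed.

End ColourWeights.

Section CompositionChains.
Variables (R : realFieldType) (d : nat) (alpha : 'I_d -> R) (N s : nat).
Variable t : cnt d -> cnt d -> cnt d -> R.
Implicit Types x y c r : cnt d.

Hypothesis t_ge0 : forall x y r, 0 <= t x y r.
Hypothesis t_csize :
  forall x y r, csize x = N -> csize r = s -> t x y r != 0 -> csize y = N.
Hypothesis t_mass :
  forall x, csize x = N -> comp_sum s (fun r => box_sum N (fun y => t x y r)) = 1.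
Hypothesis t_balance : forall x y r, csize x = N -> csize y = N -> csize r = s ->
  DM alpha N x * t x y r != 0 ->
  cnt_le x (cadd y r) /\ DM alpha N x * t x y r = DM alpha N y * t y x (csub (cadd y r) x).

Let flow x y c := if csize c == s then DM alpha N x * t x y c else 0.

Let match_comp x y (r : {ffun 'I_d -> 'I_s.+1}) := ofcnt s (csub (cadd y (tocnt r)) x).

Lemma match_compK x y (r : {ffun 'I_d -> 'I_s.+1}) :
    csize x = N -> csize y = N -> flow x y (tocnt r) != 0 ->
  match_comp y x (match_comp x y r) = r /\
  flow y x (tocnt (match_comp x y r)) = flow x y (tocnt r).
Proof.
rewrite /flow => csize_x csize_y.
case: (csize (tocnt r) =P s) => [csize_r|_]; last by rewrite eqxx.
case/(t_balance csize_x csize_y csize_r) => le_x_yr balance.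
set r' := csub (cadd y (tocnt r)) x.
have csize_r' : csize r' = s by rewrite csize_csub // csize_cadd csize_x csize_y csize_r addKn.
have r'E : tocnt (match_comp x y r) = r'.
  by rewrite ofcntK // => i; apply: leq_trans (leq_csize _ i) _; rewrite csize_r'.
rewrite /match_comp r'E csize_r' eqxx -balance; split=> //.
suff -> : csub (cadd x r') y = tocnt r by rewrite tocntK.
by apply/ffunP=> i; have := cnt_leP _ _ le_x_yr i; rewrite !ffunE; lia.
Qed.

Lemma detailed_balance x y : csize x = N -> csize y = N ->
  DM alpha N x * comp_sum s (t x y) = DM alpha N y * comp_sum s (t y x).
Proof.
move=> csize_x csize_y; rewrite !comp_sumE /box_sum !mulr_sumr.
have flowE x' y' c : DM alpha N x' * (if csize c == s then t x' y' c else 0) = flow x' y' c.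
  by rewrite /flow; case: ifP; rewrite ?mulr0.
under eq_bigr do rewrite flowE; under [RHS]eq_bigr do rewrite flowE.
by apply: (sum_support_bij (f := match_comp x y) (g := match_comp y x)) => r;
  apply: match_compK.
Qed.

Lemma reversible_chain_comp : reversible_chain alpha N (fun x y => comp_sum s (t x y)).
Proof.
have K_out x y : inX N x -> ~~ inX N y -> comp_sum s (t x y) = 0.
  move=> /eqP csize_x y_out; apply: big1 => r /eqP csize_r; apply/eqP.
  apply: contraNT y_out => t_neq0.
  by rewrite /inX (t_csize csize_x _ t_neq0) // csize_tocnt.
split=> [x y _|||x y /eqP csize_x /eqP csize_y]; last exact: detailed_balance.
- by apply: sumr_ge0 => r _; apply: t_ge0.
- exact: K_out.
move=> x x_in; rewrite -[RHS](t_mass (eqP x_in)).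
transitivity (box_sum N (fun y => comp_sum s (t x y))).
  rewrite /box_sum big_mkcond; apply: eq_bigr => y _.
  by case: ifP => // /negbT /(K_out _ _ x_in).
by rewrite /box_sum /comp_sum exchange_big.
Qed.

End CompositionChains.

Section PolyaChains.
Variables (R : realFieldType) (d : nat) (alpha : 'I_d -> R).
Hypotheses (alpha_gt0 : forall i, 0 < alpha i) (d_gt0 : (0 < d)%N).
Variables (N s : nat).
Hypothesis le_sN : (s <= N)%N.
Implicit Types x y c r : cnt d.

Local Notation polya := (polya alpha).
Local Notation hyp := (hyp R).
Local Notation DM := (DM alpha N).

Let polya_ge0 := polya_ge0 alpha_gt0 d_gt0.
Let polya_supp := polya_supp alpha_gt0 d_gt0.
Let polya_mass := polya_mass alpha_gt0 d_gt0.
Let rising_asum_neq0 := rising_asum_neq0 alpha_gt0 d_gt0.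
Let rising_asumD_neq0 := rising_asumD_neq0 alpha_gt0 d_gt0.

Lemma comp_sum_hyp_mul x F : csize x = N ->
    (forall r, csize r = s -> hyp x r != 0 -> F r = 1) ->
  comp_sum s (fun r => hyp x r * F r) = 1.
Proof.
move=> csize_x F_eq1; rewrite -[RHS](@sum_hyp R d x s) ?csize_x //.
apply: eq_bigr => r /eqP csize_r; rewrite -csize_tocnt in csize_r.
by have [->|/(F_eq1 _ csize_r)->] := eqVneq (hyp x (tocnt r)) 0; rewrite ?mul0r ?mulr1.
Qed.

Definition level_step x y r := hyp x r * polya s x (cadd y r).

Definition level_const := N`!%:R / rising (asum alpha) N / 'C(N, s)%:R *
  (s`!%:R / rising (asum alpha + N%:R) s).

Lemma level_step_supp x y r : level_step x y r != 0 ->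
  [/\ cnt_le r x, cnt_le x (cadd y r) & csize (cadd y r) = (csize x + s)%N].
Proof.
by rewrite mulf_eq0 negb_or => /andP[/hyp_supp ? /polya_supp/andP[? /eqP]].
Qed.

Lemma level_mass x : csize x = N ->
  comp_sum s (fun r => box_sum N (fun y => level_step x y r)) = 1.
Proof.
move=> csize_x.
transitivity (comp_sum s (fun r => hyp x r * box_sum N (fun y => polya s x (cadd y r)))).
  by apply: eq_bigr => r _; rewrite /box_sum mulr_sumr.
apply: comp_sum_hyp_mul => // r csize_r /hyp_supp le_rx.
rewrite box_sum_shift_csize ?polya_mass ?csize_x ?csize_r //.
move=> c /polya_supp/andP[le_xc /eqP->].
by split; [exact: cnt_le_trans le_xc | rewrite csize_x].
Qed.

Lemma DM_level_step x y r : csize x = N -> csize r = s ->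
    cnt_le r x -> cnt_le x (cadd y r) -> csize (cadd y r) = (N + s)%N ->
  DM x * level_step x y r = level_const * \prod_i level_weight (alpha i) (x i) (y i) (r i).
Proof.
move=> csize_x csize_r le_rx le_x_yr csize_yr.
rewrite /level_step polyaE ?csize_x // /polya_pmf /DM /hyp /level_const /level_weight.
rewrite csize_x csize_r; under eq_bigr do rewrite ffunE.
rewrite !natr_prod !big_split /= !prodfV.
by field; rewrite !prod_natr_fact_neq0 rising_asum_neq0 rising_asumD_neq0 natr_bin_neq0.
Qed.

Lemma level_balance x y r : csize x = N -> csize y = N -> csize r = s ->
    DM x * level_step x y r != 0 ->
  cnt_le x (cadd y r) /\
  DM x * level_step x y r = DM y * level_step y x (csub (cadd y r) x).
Proof.
move=> csize_x csize_y csize_r; rewrite mulf_eq0 negb_or => /andP[_].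
case/level_step_supp=> le_rx le_x_yr; rewrite csize_x => csize_yr.
set r' := csub (cadd y r) x; split=> //.
have csize_r' : csize r' = s by rewrite csize_csub // csize_yr csize_x addKn.
have le_r'y : cnt_le r' y.
  by apply/cnt_leP=> i; have := cnt_leP _ _ le_rx i; rewrite !ffunE; lia.
have xr'E : cadd x r' = cadd y r by rewrite cadd_csubK.
have le_y_xr' : cnt_le y (cadd x r').
  by rewrite xr'E; apply/cnt_leP=> i; rewrite ffunE leq_addr.
rewrite DM_level_step // DM_level_step // ?xr'E ?csize_yr ?csize_y //.
congr (_ * _); apply: eq_bigr => i _; rewrite !ffunE level_weight_sym //.
  by rewrite (cnt_leP _ _ le_rx).
by have := cnt_leP _ _ le_x_yr i; rewrite ffunE.
Qed.

Lemma level_reversible : reversible_chain alpha N (level_kernel alpha s).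
Proof.
apply: (reversible_chain_comp (t := level_step)) => [x y r|x y r csize_x csize_r||].
- by rewrite mulr_ge0 ?hyp_ge0 ?polya_ge0.
- by case/level_step_supp=> _ _; rewrite csize_cadd csize_x csize_r => /addIn.
- exact: level_mass.
- exact: level_balance.
Qed.

Definition downup_step x y r := hyp x r * polya s (csub x r) y.

Definition downup_const := N`!%:R / rising (asum alpha) N / 'C(N, s)%:R *
  (s`!%:R / rising (asum alpha + (N - s)%:R) s).

Lemma downup_step_supp x y r : downup_step x y r != 0 ->
  [/\ cnt_le r x, cnt_le (csub x r) y & csize y = (csize (csub x r) + s)%N].
Proof.
by rewrite mulf_eq0 negb_or => /andP[/hyp_supp ? /polya_supp/andP[? /eqP]].
Qed.

Lemma downup_mass x : csize x = N ->
  comp_sum s (fun r => box_sum N (fun y => downup_step x y r)) = 1.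
Proof.
move=> csize_x.
transitivity (comp_sum s (fun r => hyp x r * box_sum N (polya s (csub x r)))).
  by apply: eq_bigr => r _; rewrite /box_sum mulr_sumr.
apply: comp_sum_hyp_mul => // r csize_r /hyp_supp le_rx.
by rewrite polya_mass // csize_csub // csize_x csize_r subnK.
Qed.

Lemma DM_downup_step x y r : csize x = N -> csize r = s ->
    cnt_le r x -> cnt_le (csub x r) y -> csize y = (csize (csub x r) + s)%N ->
  DM x * downup_step x y r = downup_const * \prod_i downup_weight (alpha i) (x i) (y i) (r i).
Proof.
move=> csize_x csize_r le_rx le_xr_y csize_y.
rewrite /downup_step polyaE // /polya_pmf /DM /hyp /downup_const /downup_weight.
rewrite csize_csub // csize_x csize_r; under eq_bigr do rewrite ffunE.
rewrite !natr_prod !big_split /= !prodfV.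
by field; rewrite !prod_natr_fact_neq0 rising_asum_neq0 rising_asumD_neq0 natr_bin_neq0.
Qed.

Lemma downup_balance x y r : csize x = N -> csize y = N -> csize r = s ->
    DM x * downup_step x y r != 0 ->
  cnt_le x (cadd y r) /\
  DM x * downup_step x y r = DM y * downup_step y x (csub (cadd y r) x).
Proof.
move=> csize_x csize_y csize_r; rewrite mulf_eq0 negb_or => /andP[_].
case/downup_step_supp=> le_rx le_xr_y _.
have le_x_yr : cnt_le x (cadd y r).
  apply/cnt_leP=> i; have := cnt_leP _ _ le_rx i; have := cnt_leP _ _ le_xr_y i.
  by rewrite !ffunE; lia.
set r' := csub (cadd y r) x; split=> //.
have csize_r' : csize r' = s.
  by rewrite csize_csub // csize_cadd csize_x csize_y csize_r addKn.
have le_r'y : cnt_le r' y.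
  by apply/cnt_leP=> i; have := cnt_leP _ _ le_rx i; rewrite !ffunE; lia.
have yr'E : csub y r' = csub x r.
  apply/ffunP=> i; have := cnt_leP _ _ le_rx i; have := cnt_leP _ _ le_x_yr i.
  by rewrite !ffunE; lia.
have csize_xr : csize (csub x r) = (N - s)%N by rewrite csize_csub // csize_x csize_r.
rewrite DM_downup_step // ?csize_xr ?subnK ?csize_y //.
rewrite DM_downup_step // ?yr'E ?csize_xr ?subnK ?csize_x //; last first.
  by apply/cnt_leP=> i; rewrite ffunE leq_subr.
congr (_ * _); apply: eq_bigr => i _; rewrite !ffunE downup_weight_sym //.
  by rewrite (cnt_leP _ _ le_rx).
by have := cnt_leP _ _ le_x_yr i; rewrite ffunE.
Qed.

Lemma downup_reversible : reversible_chain alpha N (downup_kernel alpha s).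
Proof.
apply: (reversible_chain_comp (t := downup_step)) => [x y r|x y r csize_x csize_r||].
- by rewrite mulr_ge0 ?hyp_ge0 ?polya_ge0.
- case/downup_step_supp=> le_rx _ ->.
  by rewrite csize_csub // csize_x csize_r subnK.
- exact: downup_mass.
- exact: downup_balance.
Qed.

Definition updown_step x y r := polya s x (cadd y r) * hyp (cadd y r) r.

Definition updown_const := N`!%:R / rising (asum alpha) N *
  (s`!%:R / rising (asum alpha + N%:R) s) / 'C(N + s, s)%:R.

Lemma updown_step_supp x y r : updown_step x y r != 0 ->
  cnt_le x (cadd y r) /\ csize (cadd y r) = (csize x + s)%N.
Proof.
by rewrite mulf_eq0 negb_or => /andP[/polya_supp supp _]; case/andP: supp => ? /eqP.
Qed.

Lemma updown_mass x : csize x = N ->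
  comp_sum s (fun r => box_sum N (fun y => updown_step x y r)) = 1.
Proof.
move=> csize_x.
transitivity (comp_sum s (fun r => box_sum (N + s) (fun z => polya s x z * hyp z r))).
  apply: eq_bigr => r /eqP csize_r; rewrite -csize_tocnt in csize_r.
  have -> : (N + s = N + csize (tocnt r))%N by rewrite csize_r.
  rewrite -box_sum_shift_csize // => c.
  rewrite mulf_eq0 negb_or => /andP[/polya_supp/andP[_ /eqP->] /hyp_supp le_rc].
  by split=> //; rewrite csize_x csize_r.
transitivity (box_sum (N + s) (fun z => polya s x z * comp_sum s (hyp z))).
  by rewrite /box_sum /comp_sum exchange_big; apply: eq_bigr => z _; rewrite mulr_sumr.
rewrite -[RHS](polya_mass (k := s) (c := x) (M := N + s)) ?csize_x //.
apply: eq_bigr => z _.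
have [->|/polya_supp/andP[_ /eqP csize_z]] := eqVneq (polya s x (tocnt z)) 0.
  by rewrite mul0r.
by rewrite sum_hyp ?mulr1 // csize_z leq_addl.
Qed.

Lemma DM_updown_step x y r : csize x = N -> csize r = s ->
    cnt_le x (cadd y r) -> csize (cadd y r) = (N + s)%N ->
  DM x * updown_step x y r = updown_const * \prod_i updown_weight (alpha i) (x i) (y i) (r i).
Proof.
move=> csize_x csize_r le_x_yr csize_yr.
rewrite /updown_step polyaE ?csize_x // /polya_pmf /DM /hyp /updown_const /updown_weight.
rewrite csize_yr csize_x csize_r; under eq_bigr do rewrite ffunE.
under [X in _ * (_ * (X%:R / _))]eq_bigr do rewrite ffunE.
rewrite !natr_prod !big_split /= !prodfV.
by field; rewrite !prod_natr_fact_neq0 rising_asum_neq0 rising_asumD_neq0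
  natr_bin_neq0 ?leq_addl.
Qed.

Lemma updown_balance x y r : csize x = N -> csize y = N -> csize r = s ->
    DM x * updown_step x y r != 0 ->
  cnt_le x (cadd y r) /\
  DM x * updown_step x y r = DM y * updown_step y x (csub (cadd y r) x).
Proof.
move=> csize_x csize_y csize_r; rewrite mulf_eq0 negb_or => /andP[_].
case/updown_step_supp=> le_x_yr; rewrite csize_x => csize_yr.
set r' := csub (cadd y r) x; split=> //.
have csize_r' : csize r' = s by rewrite csize_csub // csize_yr csize_x addKn.
have xr'E : cadd x r' = cadd y r by rewrite cadd_csubK.
rewrite DM_updown_step // DM_updown_step // ?xr'E ?csize_yr ?csize_y //; last first.
  by apply/cnt_leP=> i; rewrite ffunE leq_addr.
congr (_ * _); apply: eq_bigr => i _; rewrite !ffunE updown_weight_sym //.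
by have := cnt_leP _ _ le_x_yr i; rewrite ffunE.
Qed.

Lemma updown_reversible : reversible_chain alpha N (updown_kernel alpha s).
Proof.
apply: (reversible_chain_comp (t := updown_step)) => [x y r|x y r csize_x csize_r||].
- by rewrite mulr_ge0 ?hyp_ge0 ?polya_ge0.
- by case/updown_step_supp=> _; rewrite csize_cadd csize_x csize_r => /addIn.
- exact: updown_mass.
- exact: updown_balance.
Qed.

End PolyaChains.

Theorem lemma4p4 (R : realFieldType) (d N s : nat) (alpha : 'I_d -> R) :
  (2 <= d)%N -> (1 <= N)%N -> (forall i, 0 < alpha i) -> (s <= N)%N ->
  [/\ reversible_chain alpha N (level_kernel alpha s),
      reversible_chain alpha N (downup_kernel alpha s)
    & reversible_chain alpha N (updown_kernel alpha s)].
Proof.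
move=> le2d _ alpha_gt0 le_sN; have d_gt0 : (0 < d)%N by apply: leq_trans le2d.
by split; [exact: level_reversible | exact: downup_reversible | exact: updown_reversible].
Qed.
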